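(* Let \(f\colon\mathbb{R}^n\to\mathbb{R}\) be a real valued function and \(P\colon\mathbb{R}^n\to\mathbb{R}^n\) a vector field. For arbitrary sequences of real numbers \(\{a_k\}_{k\ge0},\{b_k^-\}_{k\ge0},\{b_k^+\}_{k\ge0}\) consider the time-dependent discrete Lagrangians and discrete forces \[L^k_d(z_0,z_1)=a_k\tfrac12\|z_1-z_0\|^2-b_k^-f(z_0)-b_{k+1}^+f(z_1),\] \[(F^k_d)^-(z_0,z_1)=-\tfrac{a_{k-1}}{a_k}(b_k^-+b_k^+)P(z_0),\qquad (F^k_d)^+(z_0,z_1)=(b_k^-+b_k^+)P(z_0).\] (1) If \(f\) is differentiable with \(P=\nabla f\) and \(a_k\neq0\) for all \(k\), then the free discrete Euler–Lagrange equations of \(L^k_d\) and the forced discrete Euler–Lagrange equations of \((L^k_d,(F^k_d)^-,(F^k_d)^+)\) are respectively equivalent to the recursive schemes \[y_{k+1}=x_k-\eta_kP(x_k),\quad x_{k+1}=y_{k+1}+\mu_k(x_k-x_{k-1})\] and \[\bar y_{k+1}=\bar x_k-\eta_kP(\bar x_k),\quad \bar x_{k+1}=\bar y_{k+1}+\mu_k(\bar y_{k+1}-\bar y_k),\] where \(\mu_{k+1}=a_k/a_{k+1}\) and \(\eta_k=(b_k^-+b_k^+)/a_k\) for \(k\ge0\). (2) Conversely, given a vector field \(P\) and arbitrary real sequences \(\{\mu_{k+1}\}_{k\ge0}\), \(\{\eta_k\}_{k\ge0}\), consider the sequences defined by the two schemes above. If \(P\) is conservative, \(P=\nabla f\), and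 \(\mu_{k+1}\neq0\) for all \(k\), then both schemes are variational: they are equivalent, respectively, to the free and forced discrete Euler–Lagrange equations of the discrete Lagrangians and forces above, with \(f\) the potential of \(P\) and with \(a_0=1\), \(a_{k+1}=a_k/\mu_{k+1}\) and \(b_k^\pm=\tfrac12a_k\eta_k\) for all \(k\ge0\).
   Context: For a family of discrete Lagrangians \(L^k_d\colon\mathbb{R}^n\times\mathbb{R}^n\to\mathbb{R}\) and discrete forces \((F^k_d)^\pm\), a sequence \((x_k)\) satisfies the forced discrete Euler–Lagrange equations if \(D_1L^k_d(x_k,x_{k+1})+D_2L^{k-1}_d(x_{k-1},x_k)+(F^k_d)^-(x_k,x_{k+1})+(F^{k-1}_d)^+(x_{k-1},x_k)=0\) for all interior indices \(k\ge1\); the free discrete Euler–Lagrange equations are the same with the force terms omitted, \(D_1L^k_d(x_k,x_{k+1})+D_2L^{k-1}_d(x_{k-1},x_k)=0\). Here \(D_1,D_2\) are partial derivatives (gradients) with respect to the first and second arguments. These equations are the stationarity conditions of the discrete (Lagrange–d'Alembert) variational principle \(\delta\sum_k L^k_d(x_k,x_{k+1})+\sum_k[(F^k_d)^-(x_k,x_{k+1})\delta x_k+(F^k_d)^+(x_k,x_{k+1})\delta x_{k+1}]=0\) for variations with fixed endpoints. *)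

From HB Require Import structures.
From mathcomp Require Import all_boot all_order all_algebra.
From mathcomp Require Import all_classical all_reals all_analysis.
Set Implicit Arguments. Unset Strict Implicit. Unset Printing Implicit Defensive.
Import Order.TTheory GRing.Theory Num.Theory.
Import numFieldNormedType.Exports.
Local Open Scope ring_scope.

Definition sqnorm {R : realType} {n : nat} (z : 'rV[R]_n) : R :=
  \sum_(i < n) (z ord0 i) ^+ 2.

Definition grad {R : realType} {n : nat} (g : 'rV[R]_n -> R) (x : 'rV[R]_n)
  : 'rV[R]_n := \row_(i < n) ('D_(delta_mx ord0 i) g x).

Definition D1 {R : realType} {n : nat} (L : 'rV[R]_n -> 'rV[R]_n -> R)
  (z0 z1 : 'rV[R]_n) : 'rV[R]_n := grad (fun z => L z z1) z0.
Definition D2 {R : realType} {n : nat} (L : 'rV[R]_n -> 'rV[R]_n -> R)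
  (z0 z1 : 'rV[R]_n) : 'rV[R]_n := grad (fun z => L z0 z) z1.

Definition free_DEL {R : realType} {n : nat}
  (L : nat -> 'rV[R]_n -> 'rV[R]_n -> R) (x : nat -> 'rV[R]_n) : Prop :=
  forall k : nat, (0 < k)%N ->
    D1 (L k) (x k) (x k.+1) + D2 (L k.-1) (x k.-1) (x k) = 0.

Definition forced_DEL {R : realType} {n : nat}
  (L : nat -> 'rV[R]_n -> 'rV[R]_n -> R)
  (Fm Fp : nat -> 'rV[R]_n -> 'rV[R]_n -> 'rV[R]_n)
  (x : nat -> 'rV[R]_n) : Prop :=
  forall k : nat, (0 < k)%N ->
    D1 (L k) (x k) (x k.+1) + D2 (L k.-1) (x k.-1) (x k)
    + Fm k (x k) (x k.+1) + Fp k.-1 (x k.-1) (x k) = 0.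

Definition Ld {R : realType} {n : nat} (a bm bp : nat -> R)
  (f : 'rV[R]_n -> R) (k : nat) (z0 z1 : 'rV[R]_n) : R :=
  a k * (2^-1 * sqnorm (z1 - z0)) - bm k * f z0 - bp k.+1 * f z1.

(* (F^k_d)^-(z0,z1) = -(a_{k-1}/a_k)(b^-_k+b^+_k) P(z0)   (only used for k >= 1) *)
Definition Fdm {R : realType} {n : nat} (a bm bp : nat -> R)
  (P : 'rV[R]_n -> 'rV[R]_n) (k : nat) (z0 z1 : 'rV[R]_n) : 'rV[R]_n :=
  (- (a k.-1 / a k) * (bm k + bp k)) *: P z0.

Definition Fdp {R : realType} {n : nat} (bm bp : nat -> R)
  (P : 'rV[R]_n -> 'rV[R]_n) (k : nat) (z0 z1 : 'rV[R]_n) : 'rV[R]_n :=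
  (bm k + bp k) *: P z0.

Definition ystep {R : realType} {n : nat} (eta : nat -> R)
  (P : 'rV[R]_n -> 'rV[R]_n) (x y : nat -> 'rV[R]_n) : Prop :=
  forall k : nat, y k.+1 = x k - eta k *: P (x k).

Definition scheme_free {R : realType} {n : nat} (mu : nat -> R)
  (x y : nat -> 'rV[R]_n) : Prop :=
  forall k : nat, (0 < k)%N -> x k.+1 = y k.+1 + mu k *: (x k - x k.-1).

Definition scheme_forced {R : realType} {n : nat} (mu : nat -> R)
  (x y : nat -> 'rV[R]_n) : Prop :=
  forall k : nat, (0 < k)%N -> x k.+1 = y k.+1 + mu k *: (y k.+1 - y k).

Fixpoint aseq {R : realType} (mu : nat -> R) (k : nat) : R :=
  match k with
  | 0 => 1
  | k'.+1 => aseq mu k' / mu k'.+1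
  end.

From HB Require Import structures.
From mathcomp Require Import all_boot all_order all_algebra.
From mathcomp Require Import all_classical all_reals all_analysis.
From mathcomp Require Import ring.
Import Order.TTheory GRing.Theory Num.Theory.
Import numFieldNormedType.Exports.
Local Open Scope ring_scope.

(* Both partial gradients of L^k_d are explicit, and one computes
     D1 L^k(x_k, x_{k+1}) + D2 L^{k-1}(x_{k-1}, x_k)
       = a_k (x_k - x_{k+1}) + a_{k-1} (x_k - x_{k-1}) - (b^-_k + b^+_k) P(x_k)
       = a_k (y_{k+1} + mu_k (x_k - x_{k-1}) - x_{k+1}),
   so for a_k <> 0 the free equations are exactly the first scheme.  The two
   forces contribute -mu_k (b^-_k + b^+_k) P(x_k) + (b^-_{k-1} + b^+_{k-1}) P(x_{k-1})
   = a_k mu_k ((y_{k+1} - x_k) - (y_k - x_{k-1})), which turns mu_k (x_k - x_{k-1})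
   into mu_k (y_{k+1} - y_k): the forced equations are the second scheme.
   Part (2) is part (1) for a_k = prod_{1 <= j <= k} mu_j^-1 and
   b^-_k = b^+_k = a_k eta_k / 2,
   for which a_{k-1} / a_k = mu_k and (b^-_k + b^+_k) / a_k = eta_k. *)

Section Gradients.
Variables (R : realType) (n : nat).

Lemma is_derive_coord (j : 'I_n) (x v : 'rV[R]_n) :
  is_derive x v (fun z : 'rV[R]_n => z ord0 j) (v ord0 j).
Proof.
have coord_lin : linear (fun z : 'rV[R]_n => z ord0 j) by move=> c u w; rewrite !mxE.
pose coordL : {linear 'rV[R]_n -> R} :=
  HB.pack (fun z : 'rV[R]_n => z ord0 j) (GRing.isLinear.Build _ _ _ _ _ coord_lin).
apply: DeriveDef; first exact/diff_derivable/differentiable_coord.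
rewrite deriveE; last exact: differentiable_coord.
by rewrite (diff_lin (f := coordL)) //; exact: coord_continuous.
Qed.

Lemma is_derive_sqnorm_sub (w x v : 'rV[R]_n) :
  is_derive x v (fun z => sqnorm (z - w))
    (\sum_(j < n) 2 * (x ord0 j - w ord0 j) * v ord0 j).
Proof.
have -> : (fun z => sqnorm (z - w)) =
    \sum_(j < n) ((fun z : 'rV[R]_n => z ord0 j) - cst (w ord0 j)) ^+ 2.
  apply: funext => z; rewrite fct_sumE; apply: eq_bigr => j _.
  by rewrite exprfctE !fctE !mxE.
apply: is_derive_sum => j; apply: is_derive_eq.
  exact: is_deriveX (is_deriveB (is_derive_coord j x v) (is_derive_cst _ x v)).
by rewrite /= !fctE subr0 expr1.
Qed.

Lemma grad_half_sqnorm_sub_potential (al be ga : R) (g : 'rV[R]_n -> R)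
    (w x : 'rV[R]_n) : (forall z, differentiable g z) ->
  grad (fun z => al * (2^-1 * sqnorm (z - w)) - be * g z + ga) x
  = al *: (x - w) - be *: grad g x.
Proof.
move=> dg; apply/rowP => i; rewrite !mxE.
set e := delta_mx ord0 i.
have -> : (fun z => al * (2^-1 * sqnorm (z - w)) - be * g z + ga) =
    (al * 2^-1) *: (fun z => sqnorm (z - w)) - be *: g + cst ga.
  by apply: funext => z; rewrite !fctE /GRing.scale /= mulrA.
have dg_e : is_derive x e g ('D_e g x) by apply/derivableP/diff_derivable.
have dL := is_deriveD (is_deriveB (is_deriveZ (al * 2^-1) (is_derive_sqnorm_sub w x e))
  (is_deriveZ be dg_e)) (is_derive_cst ga x e).
rewrite derive_val /GRing.scale /= addr0.
rewrite (bigD1 i) //= big1 => [|j /negbTE ji]; last by rewrite /e mxE ji andbF mulr0.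
rewrite /e mxE !eqxx (ord1 ord0) /= addr0 mulr1; congr (_ - _).
by rewrite mulrA -(mulrA al) mulVf ?pnatr_eq0 // mulr1.
Qed.

Lemma sqnormN (v : 'rV[R]_n) : sqnorm (- v) = sqnorm v.
Proof. by apply: eq_bigr => j _; rewrite mxE sqrrN. Qed.

Lemma D1_Ld (a bm bp : nat -> R) (f : 'rV[R]_n -> R) k z0 z1 :
  (forall z, differentiable f z) ->
  D1 (Ld a bm bp f k) z0 z1 = a k *: (z0 - z1) - bm k *: grad f z0.
Proof.
move=> df; rewrite /D1 -(grad_half_sqnorm_sub_potential _ _ (- (bp k.+1 * f z1)) _ _ _ df).
by apply: (congr1 (grad^~ z0)); apply: funext => z; rewrite /Ld -sqnormN opprB.
Qed.

Lemma D2_Ld (a bm bp : nat -> R) (f : 'rV[R]_n -> R) k z0 z1 :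
  (forall z, differentiable f z) ->
  D2 (Ld a bm bp f k) z0 z1 = a k *: (z1 - z0) - bp k.+1 *: grad f z1.
Proof.
move=> df; rewrite /D2 -(grad_half_sqnorm_sub_potential _ _ (- (bm k * f z0)) _ _ _ df).
by apply: (congr1 (grad^~ z1)); apply: funext => z; rewrite /Ld addrAC.
Qed.

End Gradients.

Lemma scaler_sub_eq0 (R : fieldType) (V : lmodType R) (c : R) (u v : V) :
  c != 0 -> c *: (u - v) = 0 <-> v = u.
Proof.
move=> c0; split; last by move=> ->; rewrite subrr scaler0.
by move/eqP; rewrite scaler_eq0 (negbTE c0) subr_eq0 => /eqP.
Qed.

Section DiscreteEulerLagrange.
Variables (R : realType) (n : nat).
Variables (f : 'rV[R]_n -> R) (P : 'rV[R]_n -> 'rV[R]_n) (a bm bp mu eta : nat -> R).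
Hypothesis f_differentiable : forall z, differentiable f z.
Hypothesis P_grad : forall z, P z = grad f z.
Hypothesis a_neq0 : forall k, a k != 0.
Hypothesis mu_ratio : forall k, (0 < k)%N -> mu k = a k.-1 / a k.
Hypothesis eta_ratio : forall k, eta k = (bm k + bp k) / a k.

Let L := Ld a bm bp f.

Lemma free_DEL_residual {x y : nat -> 'rV[R]_n} {k : nat} :
  ystep eta P x y -> (0 < k)%N ->
  D1 (L k) (x k) (x k.+1) + D2 (L k.-1) (x k.-1) (x k)
  = a k *: (y k.+1 + mu k *: (x k - x k.-1) - x k.+1).
Proof.
move=> ystepP; case: k => [//|k] _ /=.
rewrite D1_Ld // D2_Ld // ystepP mu_ratio // eta_ratio -!P_grad.
by apply/rowP => i; rewrite !mxE /=; field; exact: a_neq0.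
Qed.

Lemma forced_DEL_residual {x y : nat -> 'rV[R]_n} {k : nat} :
  ystep eta P x y -> (0 < k)%N ->
  D1 (L k) (x k) (x k.+1) + D2 (L k.-1) (x k.-1) (x k)
  + Fdm a bm bp P k (x k) (x k.+1) + Fdp bm bp P k.-1 (x k.-1) (x k)
  = a k *: (y k.+1 + mu k *: (y k.+1 - y k) - x k.+1).
Proof.
move=> ystepP; case: k => [//|k] _ /=.
rewrite D1_Ld // D2_Ld // /Fdm /Fdp !ystepP mu_ratio // !eta_ratio -!P_grad /=.
by apply/rowP => i; rewrite !mxE /=; field; rewrite !a_neq0.
Qed.

Lemma free_DEL_iff_scheme_free (x y : nat -> 'rV[R]_n) :
  ystep eta P x y -> free_DEL L x <-> scheme_free mu x y.
Proof.
move=> ystepP; split=> DEL k k0; move: (DEL k k0).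
  by rewrite (free_DEL_residual ystepP k0) => /scaler_sub_eq0->.
by rewrite (free_DEL_residual ystepP k0) => ->; rewrite subrr scaler0.
Qed.

Lemma forced_DEL_iff_scheme_forced (x y : nat -> 'rV[R]_n) :
  ystep eta P x y ->
  forced_DEL L (Fdm a bm bp P) (Fdp bm bp P) x <-> scheme_forced mu x y.
Proof.
move=> ystepP; split=> DEL k k0; move: (DEL k k0).
  by rewrite (forced_DEL_residual ystepP k0) => /scaler_sub_eq0->.
by rewrite (forced_DEL_residual ystepP k0) => ->; rewrite subrr scaler0.
Qed.

End DiscreteEulerLagrange.

Lemma aseq_neq0 (R : realType) (mu : nat -> R) k :
  (forall k, mu k.+1 != 0) -> aseq mu k != 0.
Proof.
move=> mu_neq0; elim: k => [|k IH] /=; first exact: oner_neq0.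
by rewrite mulf_neq0 // invr_neq0.
Qed.

Lemma aseq_ratio (R : realType) (mu : nat -> R) k :
  (forall k, mu k.+1 != 0) -> (0 < k)%N -> mu k = aseq mu k.-1 / aseq mu k.
Proof.
move=> mu_neq0; case: k => [//|k] _ /=.
by rewrite invf_div mulrCA divff ?mulr1 // aseq_neq0.
Qed.

Theorem theorem7p2 (R : realType) (n : nat) :
  (* Part (1) *)
  (forall (f : 'rV[R]_n -> R) (P : 'rV[R]_n -> 'rV[R]_n) (a bm bp : nat -> R),
     (forall z, differentiable f z) -> (forall z, P z = grad f z) ->
     (forall k, a k != 0) ->
     let mu := fun k : nat => a k.-1 / a k in
     let eta := fun k : nat => (bm k + bp k) / a k in
     (forall x y : nat -> 'rV[R]_n, ystep eta P x y ->
        (free_DEL (Ld a bm bp f) x <-> scheme_free mu x y)) /\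
     (forall x y : nat -> 'rV[R]_n, ystep eta P x y ->
        (forced_DEL (Ld a bm bp f) (Fdm a bm bp P) (Fdp bm bp P) x
         <-> scheme_forced mu x y))) /\
  (* Part (2) *)
  (forall (f : 'rV[R]_n -> R) (P : 'rV[R]_n -> 'rV[R]_n) (mu eta : nat -> R),
     (forall z, differentiable f z) -> (forall z, P z = grad f z) ->
     (forall k, mu k.+1 != 0) ->
     let a := aseq mu in
     let b := fun k : nat => 2^-1 * a k * eta k in
     (forall x y : nat -> 'rV[R]_n, ystep eta P x y ->
        (scheme_free mu x y <-> free_DEL (Ld a b b f) x)) /\
     (forall x y : nat -> 'rV[R]_n, ystep eta P x y ->
        (scheme_forced mu x y
         <-> forced_DEL (Ld a b b f) (Fdm a b b P) (Fdp b b P) x))).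
Proof.
split.
- move=> f P a bm bp df P_grad a_neq0 mu eta.
  by split=> x y; [apply: free_DEL_iff_scheme_free | apply: forced_DEL_iff_scheme_forced].
- move=> f P mu eta df P_grad mu_neq0 a b.
  have a_neq0 k : a k != 0 by apply: aseq_neq0.
  have mu_ratio k : (0 < k)%N -> mu k = a k.-1 / a k by apply: aseq_ratio.
  have eta_ratio k : eta k = (b k + b k) / a k by rewrite /b; field; apply: a_neq0.
  split=> x y ystepP; apply: iff_sym.
    by apply: free_DEL_iff_scheme_free.
  by apply: forced_DEL_iff_scheme_forced.
Qed.
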